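(* Let $B$ be a nilpotent $n\times n$ matrix with $\mathrm{sh}(B)=(\lambda,\lambda)$ (so $n=2\lambda$). If $\underline{\mu}=(\mu_1,\ldots,\mu_s)\in\mathcal{P}(\mathcal{N}_B)$, then either $\underline{\mu}=(n)$ or $\mu_1\le\lambda+1$.
   Context: $\mathbb{F}$ is an algebraically closed field of characteristic $0$. For a nilpotent matrix $A$, $\mathrm{sh}(A)$ is the partition of $n$ given by the sizes of the Jordan blocks of its Jordan canonical form; $\mathcal{N}_B$ is the set of nilpotent $n\times n$ matrices over $\mathbb{F}$ commuting with $B$ and $\mathcal{P}(\mathcal{N}_B)=\{\mathrm{sh}(A):A\in\mathcal{N}_B\}$. *)

From HB Require Import structures.
From mathcomp Require Import all_boot all_order all_algebra.
Set Implicit Arguments. Unset Strict Implicit. Unset Printing Implicit Defensive.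
Import GRing.Theory.
Local Open Scope ring_scope.

Definition is_partition (mu : seq nat) : bool :=
  sorted geq mu && all (fun x => 0 < x)%N mu.

Definition block_ends (mu : seq nat) : seq nat :=
  [seq sumn (take k mu) | k <- iota 1 (size mu)].

(* The nilpotent Jordan matrix with blocks of sizes mu (in that order):
   ones on the superdiagonal except at the boundaries between blocks. *)
Definition jordan_nil (F : fieldType) (n : nat) (mu : seq nat) : 'M[F]_n :=
  \matrix_(i < n, j < n)
    (if (j == i.+1 :> nat) && (i.+1 \notin block_ends mu) then 1 else 0).

Definition mx_similar (F : fieldType) (n : nat) (A C : 'M[F]_n) : Prop :=
  exists2 P : 'M[F]_n, P \in unitmx & P *m A = C *m P.

Definition mx_nilpotent (F : fieldType) (n : nat) (A : 'M[F]_n) : Prop :=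
  exists k : nat, iter k (mulmx A) 1%:M = 0.

(* sh(A) = mu : mu is a partition of n and the Jordan canonical form of A
   is the nilpotent Jordan matrix with blocks of sizes mu. *)
Definition has_shape (F : fieldType) (n : nat) (A : 'M[F]_n) (mu : seq nat) : Prop :=
  [/\ is_partition mu, sumn mu = n & mx_similar A (jordan_nil F n mu)].

(* Conjugating, we may take B = J, the Jordan matrix with two shift blocks
   of size L = lam.  A matrix C commuting with J has upper triangular
   Toeplitz blocks; their leading coefficients form a 2 x 2 matrix, and
   taking it is multiplicative on the centralizer of J.  For nilpotent C
   this 2 x 2 matrix is nilpotent, hence triangularizable by a matrix whose
   Kronecker lift commutes with J.  When it is strictly upper triangular,
   either some integer potential on the indices increases along every
   nonzero entry of C, which forces C ^+ (L + 1) = 0, or there is a unique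
   walk of nonzero entries through all 2L indices, so C ^+ (2L - 1) <> 0.
   Finally, the vanishing powers of a nilpotent Jordan matrix are exactly
   those of exponent at least its largest block, which turns this
   dichotomy on the powers of A into the claimed one on sh(A). *)
From HB Require Import structures.
From mathcomp Require Import all_boot all_order all_algebra.
From mathcomp Require Import zify ring.
Import GRing.Theory.
Local Open Scope ring_scope.
Set Implicit Arguments. Unset Strict Implicit. Unset Printing Implicit Defensive.

Fixpoint walk {T : Type} (R : T -> T -> Prop) (m : nat) (i j : T) : Prop :=
  if m is m'.+1 then exists2 k, R i k & walk R m' k j else i = j.

Lemma walk_potential {T : Type} (R : T -> T -> Prop) (q : T -> nat) :
  (forall i j, R i j -> q i < q j)%N ->
  forall m i j, walk R m i j -> (q i + m <= q j)%N.
Proof.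
move=> Rq; elim=> [|m IH] i j /=; first by move=> ->; rewrite addn0.
by case=> k /Rq ik /IH kj; lia.
Qed.

Lemma sumr_neq0_term (V : nmodType) (I : finType) (f : I -> V) :
  \sum_i f i != 0 -> exists i, f i != 0.
Proof.
move=> nz; apply/existsP; apply: contraNT nz => /existsPn f0.
by rewrite big1 // => i _; apply/eqP/negbNE/f0.
Qed.

Section MatrixPowers.
Variables (F : fieldType) (n : nat).
Implicit Types (M : 'M[F]_n) (i j : 'I_n).

Lemma iter_mulmx M k : iter k (mulmx M) 1%:M = M ^+ k.
Proof. by elim: k => [|k IH] //=; rewrite exprS IH. Qed.

Lemma exp_support_walk M (R : 'I_n -> 'I_n -> Prop) :
  (forall i j, M i j != 0 -> R i j) ->
  forall m i j, (M ^+ m) i j != 0 -> walk R m i j.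
Proof.
move=> MR; elim=> [|m IH] i j.
  rewrite expr0 mxE => nz; apply/eqP; apply: contraNT nz => /negbTE ->.
  by rewrite mulr0n eqxx.
rewrite exprS mxE => /sumr_neq0_term[k].
by rewrite mulf_eq0 negb_or => /andP[/MR ik /IH kj]; exists k.
Qed.

Lemma exp_potential M (q : 'I_n -> nat) m i j :
  (forall i j, M i j != 0 -> (q i < q j)%N) ->
  (M ^+ m) i j != 0 -> (q i + m <= q j)%N.
Proof.
by move=> Mq /(@exp_support_walk M (fun i j => q i < q j)%N Mq); apply: walk_potential.
Qed.

Lemma exp_potential_eq0 M (q : 'I_n -> nat) m :
  (forall i j, M i j != 0 -> (q i < q j)%N) -> (forall j, q j < m)%N ->
  M ^+ m = 0.
Proof.
move=> Mq qm; apply/matrixP => i j; rewrite mxE; apply/eqP/contraT => nz.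
by have := exp_potential Mq nz; have := qm j; lia.
Qed.

(* Conversely, if q is injective and s runs through a chain of nonzero
   entries of M visiting the potential levels 0, ..., K in order, then the
   chain is the only walk between its points, so M ^+ m does not vanish
   between s a and s (a + m). *)
Lemma exp_chain_neq0 M (q : 'I_n -> nat) (s : nat -> 'I_n) K :
  (forall i j, M i j != 0 -> (q i < q j)%N) -> injective q ->
  (forall k, k <= K -> q (s k) = k)%N ->
  (forall k, (k < K)%N -> M (s k) (s k.+1) != 0) ->
  forall m a, (a + m <= K)%N -> (M ^+ m) (s a) (s (a + m)%N) != 0.
Proof.
move=> Mq q_inj qs chain; elim=> [|m IH] a le_amK.
  by rewrite addn0 expr0 mxE eqxx oner_eq0.
rewrite exprS mxE (bigD1 (s a.+1)) //= big1 ?addr0.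
  by rewrite -addSnnS mulf_neq0 ?chain ?IH //; lia.
move=> k ne_k; apply/eqP; rewrite mulf_eq0; apply: contraNT ne_k.
rewrite negb_or => /andP[/Mq lt_ak /(exp_potential Mq) le_k].
apply/eqP/q_inj; rewrite qs ?qs in lt_ak le_k *; lia.
Qed.

Lemma similar_exp_eq0 (P A C : 'M[F]_n) m : P \in unitmx -> P *m A = C *m P ->
  (A ^+ m == 0) = (C ^+ m == 0).
Proof.
move=> P_unit PA.
have PAm : P *m A ^+ m = C ^+ m *m P.
  elim: m => [|m IH]; first by rewrite !expr0 mulmx1 mul1mx.
  by rewrite !exprSr mulmxA IH -mulmxA PA mulmxA.
apply/eqP/eqP => [Am0|Cm0].
  by rewrite -[C ^+ m]mulmx1 -(mulmxV P_unit) mulmxA -PAm Am0 mulmx0 mul0mx.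
by rewrite -[A ^+ m]mul1mx -(mulVmx P_unit) -mulmxA PAm Cm0 mul0mx mulmx0.
Qed.

Lemma similar_commute (P A B J : 'M[F]_n) : P \in unitmx -> P *m B = J *m P ->
  A *m B = B *m A -> (P *m A *m invmx P) *m J = J *m (P *m A *m invmx P).
Proof.
move=> P_unit PB AB.
have -> : J = P *m B *m invmx P by rewrite PB mulmxK.
by rewrite !mulmxA !mulmxKV // -!(mulmxA P) AB.
Qed.

End MatrixPowers.

Section JordanNilpotent.
Variable F : fieldType.

Lemma block_ends_cons x s :
  block_ends (x :: s) = x :: map (addn x) (block_ends s).
Proof.
rewrite /block_ends /= take0 addn0; congr (_ :: _).
by rewrite (iotaDl 1 1) -!map_comp; apply: eq_map => k /=; rewrite add0n.
Qed.

Lemma block_ends_ge x s e : e \in block_ends (x :: s) -> (x <= e)%N.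
Proof.
by rewrite block_ends_cons inE => /orP[/eqP -> //|/mapP[y _ ->]]; apply: leq_addr.
Qed.

Lemma block_ends_gap h s i : all (fun y => y <= h)%N s -> (i < sumn s)%N ->
  exists2 e, e \in block_ends s & (i < e <= i + h)%N.
Proof.
elim: s i => [|x s IH] i //= /andP[le_xh le_sh] lt_i.
have [lt_ix|le_xi] := ltnP i x.
  by exists x; [rewrite block_ends_cons mem_head | lia].
have [e e_end lt_e] := IH (i - x)%N le_sh ltac:(lia).
exists (x + e)%N; last by lia.
by rewrite block_ends_cons inE map_f ?orbT.
Qed.

Lemma partition_head_max x s : sorted geq (x :: s) -> all (fun y => y <= x)%N (x :: s).
Proof.
move=> sorted_xs; rewrite /= leqnn /=.
by apply: (order_path_min (leT := geq)) sorted_xs => a b c /= ba cb; apply: leq_trans cb ba.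
Qed.

Lemma jordan_nil_exp_support n mu m (i j : 'I_n) :
  (jordan_nil F n mu ^+ m) i j != 0 ->
  j = (i + m)%N :> nat /\ forall t, (i < t <= i + m)%N -> t \notin block_ends mu.
Proof.
have supp (i' j' : 'I_n) : jordan_nil F n mu i' j' != 0 ->
    j' = i'.+1 :> nat /\ i'.+1 \notin block_ends mu.
  by rewrite mxE; case: ifP => [/andP[/eqP -> ->]|]; rewrite ?eqxx.
move/(exp_support_walk supp).
elim: m i => [|m IH] i /=; first by move=> ->; split=> [|t]; [rewrite addn0 | lia].
case=> k [k_eq not_end] /IH[-> no_end]; rewrite k_eq; split=> [|t lt_t]; first by lia.
by have [->|ne] := eqVneq t i.+1; last by apply: no_end; lia.
Qed.

Section Index.
Variables (n : nat) (mu : seq nat).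
Hypotheses (mu_part : is_partition mu) (mu_sum : sumn mu = n).

Lemma jordan_nil_exp_head : jordan_nil F n mu ^+ head 0%N mu = 0.
Proof.
apply/matrixP => i j; rewrite mxE; apply/eqP/contraT.
move=> /jordan_nil_exp_support[_ no_end].
case: mu mu_part mu_sum no_end => [|x s] /andP[sorted_mu _] sum_mu no_end /=.
  by have := ltn_ord i; rewrite /= in sum_mu; lia.
have [e e_end /no_end] := block_ends_gap (i := i) (partition_head_max sorted_mu)
  ltac:(by rewrite sum_mu).
by rewrite e_end.
Qed.

(* Below that exponent the power survives: the first block carries a chain
   of nonzero superdiagonal entries of length (head mu).-1. *)
Lemma jordan_nil_exp_head_pred : (0 < n)%N -> jordan_nil F n mu ^+ (head 0%N mu).-1 != 0.
Proof.
case: n mu_sum => // n' sum_mu _.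
case: mu mu_part sum_mu => [|x s] // /andP[_ /andP[x_gt0 _]] /= sum_mu.
set J := jordan_nil F n'.+1 (x :: s).
have nz : (J ^+ x.-1) (inord 0) (inord (0 + x.-1)) != 0.
  apply: (exp_chain_neq0 (q := val) (s := inord) (K := x.-1)) => //.
  - move=> i j; rewrite mxE /=.
    by case: ifP => [/andP[/eqP -> _] //|]; rewrite eqxx.
  - exact: val_inj.
  - by move=> k le_k /=; rewrite inordK //; lia.
  move=> k lt_k; rewrite mxE !inordK /=; try lia.
  by case: ifP => [|/negbT]; rewrite ?oner_eq0 //= eqxx /= negbK => /block_ends_ge; lia.
by apply: contraNneq nz => ->; rewrite mxE.
Qed.

Lemma jordan_nil_exp_eq0 m : (0 < n)%N ->
  (jordan_nil F n mu ^+ m == 0) = (head 0%N mu <= m)%N.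
Proof.
move=> n_gt0; have [le_hm|lt_mh] := leqP (head 0%N mu) m.
  by rewrite -(subnKC le_hm) exprD jordan_nil_exp_head mul0r eqxx.
apply: contraNF (jordan_nil_exp_head_pred n_gt0) => /eqP Jm0.
by rewrite -(subnKC (_ : m <= (head 0%N mu).-1)%N) ?exprD ?Jm0 ?mul0r //; lia.
Qed.

End Index.
End JordanNilpotent.

Section ShiftCentralizer.
Variable F : fieldType.

Definition shift_mx (p : nat) : 'M[F]_p := \matrix_(i, j) (j == i.+1 :> nat)%:R.

Definition twin_shift (L : nat) : 'M[F]_(L + L) :=
  block_mx (shift_mx L) 0 0 (shift_mx L).

Lemma jordan_nil_twin L : jordan_nil F (L + L) [:: L; L] = twin_shift L.
Proof.
apply/matrixP => i j; rewrite -(splitK i) -(splitK j).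
case: (split i) => i'; case: (split j) => j' /=;
  rewrite ?block_mxEul ?block_mxEur ?block_mxEdl ?block_mxEdr !mxE /block_ends /= !inE /=.
all: have := ltn_ord i'; have := ltn_ord j'.
all: by case: ifP => cond //; try (case: eqP => eq_j //=); lia.
Qed.

(* The Jordan matrix of shape (1, 1) is 0, so it commutes with everything. *)
Lemma twin_shift1 : twin_shift 1 = 0.
Proof.
rewrite /twin_shift (_ : shift_mx 1 = 0) ?block_mx0 //.
by apply/matrixP => i j; rewrite !mxE !ord1.
Qed.

Variable p : nat.
Implicit Types (M : 'M[F]_p.+1) (k j : 'I_p.+1).

Lemma mul_shift_entry M k j :
  (M *m shift_mx p.+1) k j = if (0 < j)%N then M k (inord j.-1) else 0.
Proof.
rewrite mxE; case: j => [[|j] lt_j] /=.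
  by rewrite big1 // => i _; rewrite mxE /= mulr0.
rewrite (bigD1 (inord j)) /= ?mxE ?inordK ?eqxx ?mulr1 //; try lia.
rewrite big1 ?addr0 // => i ne_i; rewrite mxE eqSS.
by case: eqP => [e|_]; [move: ne_i; rewrite e inord_val eqxx | rewrite mulr0].
Qed.

Lemma shift_mul_entry M k j :
  (shift_mx p.+1 *m M) k j = if (k.+1 < p.+1)%N then M (inord k.+1) j else 0.
Proof.
rewrite mxE; case: ifP => lt_k.
  rewrite (bigD1 (inord k.+1)) /= ?mxE ?inordK ?eqxx ?mul1r //.
  rewrite big1 ?addr0 // => i ne_i; rewrite mxE.
  by case: eqP => [e|_]; [move: ne_i; rewrite -e inord_val eqxx | rewrite mul0r].
rewrite big1 // => i _; rewrite mxE; case: eqP => [e|_]; last by rewrite mul0r.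
by move: (ltn_ord i) lt_k; rewrite e => ->.
Qed.

Lemma shift_centralizer_toeplitz M : M *m shift_mx p.+1 = shift_mx p.+1 *m M ->
  forall k j, M k j = if (k <= j)%N then M ord0 (inord (j - k)) else 0.
Proof.
move=> comm_M.
have shift_eq k j : (if (0 < j)%N then M k (inord j.-1) else 0) =
    (if (k.+1 < p.+1)%N then M (inord k.+1) j else 0).
  by rewrite -mul_shift_entry -shift_mul_entry comm_M.
suff toep_row (k : nat) : (k < p.+1)%N -> forall j,
    M (inord k) j = if (k <= j)%N then M ord0 (inord (j - k)) else 0.
  by move=> k j; rewrite -toep_row ?inord_val.
elim: k => [|k IH] lt_k j.
  by rewrite subn0 inord_val; congr (M _ _); apply: val_inj; rewrite /= inordK.
have := shift_eq (inord k) j; rewrite inordK ?lt_k => [<-|]; last by lia.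
case: j => [[|j] lt_j] //=.
by rewrite IH ?inordK /= ?ltnS ?subSS //; lia.
Qed.

End ShiftCentralizer.

Section ScalarBlocks.
Variable F : fieldType.

(* The 2 x 2 block matrix with scalar blocks, i.e. the Kronecker product of
   a 2 x 2 matrix with the identity of size p. *)
Definition scalar_blocks {p} (a b c d : F) : 'M[F]_(p + p) :=
  block_mx a%:M b%:M c%:M d%:M.

Variable p : nat.

Lemma scalar_blocks_mul a b c d a' b' c' d' :
  scalar_blocks a b c d *m scalar_blocks a' b' c' d' =
  scalar_blocks (a * a' + b * c') (a * b' + b * d') (c * a' + d * c') (c * b' + d * d')
  :> 'M_(p + p).
Proof. by rewrite /scalar_blocks mulmx_block -!scalar_mxM -!raddfD. Qed.

Lemma scalar_blocks_scalar a : scalar_blocks a 0 0 a = a%:M :> 'M_(p + p).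
Proof. by rewrite /scalar_blocks raddf0 [RHS]scalar_mx_block. Qed.

Lemma scalar_blocks_comm (M : 'M[F]_p) a b c d :
  scalar_blocks a b c d *m block_mx M 0 0 M = block_mx M 0 0 M *m scalar_blocks a b c d.
Proof. by rewrite /scalar_blocks !mulmx_block !mulmx0 !mul0mx !addr0 !add0r !scalar_mxC. Qed.

End ScalarBlocks.

Section TwinCentralizer.
Variables (F : fieldType) (l : nat).
Local Notation L := l.+1.
Local Notation J := (twin_shift F L).
Implicit Types (C D : 'M[F]_(L + L)) (a b : bool) (k : 'I_L).

Definition ix a k : 'I_(L + L) := if a then rshift L k else lshift L k.

Lemma ixP (i : 'I_(L + L)) : exists a k, i = ix a k.
Proof.
by rewrite -(splitK i); case: (split i) => k; [exists false | exists true]; exists k.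
Qed.

Definition side (i : 'I_(L + L)) : bool := (L <= i)%N.
Definition depth (i : 'I_(L + L)) : nat := (i - side i * L)%N.

Lemma side_ix a k : side (ix a k) = a.
Proof. by rewrite /side; case: a => /=; have := ltn_ord k; lia. Qed.

Lemma depth_ix a k : depth (ix a k) = k.
Proof. by rewrite /depth side_ix; case: a => /=; lia. Qed.

Lemma inord0 : inord 0 = ord0 :> 'I_L.
Proof. by apply: val_inj; rewrite /= inordK. Qed.

Lemma twin_ind2 (P : 'I_(L + L) -> 'I_(L + L) -> Prop) :
  (forall a k b k', P (ix a k) (ix b k')) -> forall i j, P i j.
Proof. by move=> Pix i j; have [a [k ->]] := ixP i; have [b [k' ->]] := ixP j. Qed.

(* The leading coefficients of the four Toeplitz blocks. *)
Definition corner C a b : F := C (ix a ord0) (ix b ord0).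

(* Each block of a matrix commuting with J commutes with the shift, hence
   is upper triangular Toeplitz. *)
Lemma twin_toeplitz C : C *m J = J *m C -> forall a b k k',
  C (ix a k) (ix b k') = if (k <= k')%N then C (ix a ord0) (ix b (inord (k' - k))) else 0.
Proof.
rewrite /twin_shift -(submxK C) !mulmx_block !mulmx0 !mul0mx !addr0 !add0r.
case/eq_block_mx => ul ur dl dr a b k k'.
have toep := @shift_centralizer_toeplitz F l.
by case: a; case: b; rewrite /ix ?block_mxEul ?block_mxEur ?block_mxEdl ?block_mxEdr;
  [exact: toep _ dr k k' | exact: toep _ dl k k' | exact: toep _ ur k k' | exact: toep _ ul k k'].
Qed.

Lemma twin_support C : C *m J = J *m C -> forall a b k k', C (ix a k) (ix b k') != 0 ->
  (k < k')%N /\ (k' = k.+1 :> nat -> C (ix a ord0) (ix b (inord 1)) != 0)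
  \/ k = k' /\ corner C a b != 0.
Proof.
move=> comm a b k k'; rewrite (twin_toeplitz comm).
case: ltngtP => [lt_k|_|eq_k]; [move=> nz; left | by rewrite eqxx | move=> nz; right].
  by split=> // e; rewrite e subSnn in nz.
split; first exact: val_inj.
by rewrite eq_k subnn inord0 in nz.
Qed.

Definition corners {q} C : 'M[F]_(q + q) :=
  scalar_blocks (corner C false false) (corner C false true)
                (corner C true false) (corner C true true).

Lemma twin_below_zero C : C *m J = J *m C ->
  forall a b k, (0 < k)%N -> C (ix a k) (ix b ord0) = 0.
Proof. by move=> comm a b k k_gt0; rewrite (twin_toeplitz comm) leqNgt k_gt0. Qed.

Lemma corner_mul C D : D *m J = J *m D -> forall a b,
  corner (C *m D) a b = corner C a false * corner D false b + corner C a true * corner D true b.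
Proof.
move=> comm a b; rewrite /corner mxE big_split_ord /= !big_ord_recl /=.
rewrite !big1 ?addr0 // => i _.
  by rewrite [D _ _](twin_below_zero comm true b (k := lift ord0 i)) ?mulr0.
by rewrite [D _ _](twin_below_zero comm false b (k := lift ord0 i)) ?mulr0.
Qed.

Lemma corners_mul q C D : D *m J = J *m D ->
  corners (C *m D) = corners C *m corners D :> 'M_(q + q).
Proof. by move=> comm; rewrite /corners scalar_blocks_mul !corner_mul. Qed.

Lemma corner_scalar_blocks x y z w a b : corner (scalar_blocks x y z w) a b =
  if a then (if b then w else z) else (if b then y else x).
Proof.
by case: a; case: b;
  rewrite /corner /ix /scalar_blocks ?block_mxEul ?block_mxEur ?block_mxEdl ?block_mxEdr mxE eqxx.
Qed.

Lemma corners_scalar_blocks q x y z w :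
  corners (scalar_blocks x y z w) = scalar_blocks x y z w :> 'M_(q + q).
Proof. by rewrite /corners !corner_scalar_blocks. Qed.

Lemma corners_scalar q x : corners x%:M = x%:M :> 'M_(q + q).
Proof. by rewrite -[x%:M in LHS]scalar_blocks_scalar corners_scalar_blocks scalar_blocks_scalar. Qed.

Lemma corners_exp q C m : C *m J = J *m C ->
  corners (C ^+ m) = corners C ^+ m :> 'M_(q + q).
Proof.
move=> comm; elim: m => [|m IH]; first exact: corners_scalar.
by rewrite !exprSr corners_mul // IH.
Qed.

(* If the matrix of leading coefficients is strictly upper
   triangular, then either no walk of length L + 1 has nonzero weight, or the
   walk (0, first block) -> (0, second block) -> (1, first block) -> ...
   through all 2L indices does, so that C ^+ (2L - 1) <> 0. *)
Lemma twin_upper_dichotomy C : C *m J = J *m C ->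
  corner C false false = 0 -> corner C true false = 0 -> corner C true true = 0 ->
  (C ^+ L.+1 == 0) || (C ^+ (L + L).-1 != 0).
Proof.
move=> comm c00 c10 c11.
have upper a b : corner C a b != 0 -> ~~ a && b.
  by case: a; case: b; rewrite ?c00 ?c10 ?c11 ?eqxx.
have [back0|back_nz] := eqVneq (C (ix true ord0) (ix false (inord 1))) 0.
- (* No step returns from the second block to the next row of the first:
     depth + side is a potential bounded by L. *)
  apply/orP; left; apply/eqP.
  apply: (exp_potential_eq0 (q := fun i => (depth i + side i)%N)) => [|j]; last first.
    by have [a [k ->]] := ixP j; rewrite depth_ix side_ix; have := ltn_ord k; case: a => /=; lia.
  apply: twin_ind2 => a k b k' /(twin_support comm)[[lt_k back]|[<- /upper]];
    rewrite !depth_ix !side_ix; [|by case: a b => [] [] //= _; lia].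
  case: a b back => [] [] //= back; try lia.
  by have [/back|] := eqVneq (k' : nat) k.+1; [rewrite back0 eqxx | lia].
have [b0|b_nz] := eqVneq (corner C false true) 0.
- (* All leading coefficients vanish: the depth is a potential. *)
  apply/orP; left; apply/eqP.
  apply: (exp_potential_eq0 (q := depth)) => [|j]; last first.
    by have [a [k ->]] := ixP j; rewrite depth_ix; have := ltn_ord k; lia.
  apply: twin_ind2 => a k b k' /(twin_support comm)[[lt_k _]|[<- nz]];
    rewrite !depth_ix //.
  by move: nz; case: a; case: b; rewrite ?c00 ?c10 ?c11 ?b0 eqxx.
(* The interleaving potential 2 depth + side is injective and increasing;
   the walk visiting its levels 0, ..., 2L - 1 in order has nonzero steps. *)
pose s m := ix (odd m) (inord m./2).
have chain : (C ^+ (L + L).-1) (s 0%N) (s (0 + (L + L).-1)%N) != 0.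
  apply: (exp_chain_neq0 (q := fun i => (depth i + depth i + side i)%N) (K := (L + L).-1)) => //.
  - apply: twin_ind2 => a k b k' /(twin_support comm)[[lt_k _]|[<- /upper]];
      rewrite !depth_ix !side_ix; [|by case: a b => [] [] //= _; lia].
    by case: a; case: b => /=; lia.
  - move=> i j /=; have [a [k ->]] := ixP i; have [b [k' ->]] := ixP j.
    rewrite !depth_ix !side_ix => e.
    have eq_ab : a = b by case: a b e => [] [] //= e; lia.
    by subst b; congr ix; apply: val_inj => /=; case: a e => /= e; lia.
  - move=> m le_m; move: (odd_double_half m) => odm.
    by rewrite /s depth_ix side_ix inordK; lia.
  move=> m lt_m; rewrite /s /= (twin_toeplitz comm) uphalf_half.
  move: (odd_double_half m) => odm; rewrite !inordK; try lia.
  case: (odd m) odm => /= odm.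
    by rewrite add1n leqnSn subSnn.
  by rewrite add0n leqnn subnn inord0.
by apply/orP; right; apply: contraNneq chain => ->; rewrite mxE.
Qed.

End TwinCentralizer.

Section Lift.
Variables (F : fieldType) (l : nat).
Local Notation M2 := 'M[F]_(1 + 1).

(* A 2 x 2 matrix coincides with its matrix of corners; placing its entries
   in scalar blocks of size L gives its lift R (x) 1, which is a ring
   morphism from 2 x 2 matrices to the centralizer of J. *)
Lemma corners2 (R : M2) : corners R = R.
Proof.
rewrite -[RHS]submxK [ulsubmx R]mx11_scalar [ursubmx R]mx11_scalar.
by rewrite [dlsubmx R]mx11_scalar [drsubmx R]mx11_scalar !mxE.
Qed.

Lemma lift_corners (R : M2) : corners (corners R : 'M_(l.+1 + l.+1)) = R.
Proof. exact: etrans (corners_scalar_blocks l 1 _ _ _ _) (corners2 R). Qed.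

Lemma lift_mul (R R' : M2) :
  corners (R *m R') = corners R *m corners R' :> 'M_(l.+1 + l.+1).
Proof. by apply: corners_mul; rewrite twin_shift1 mulmx0 mul0mx. Qed.

End Lift.

Section TwoByTwo.
Variable F : fieldType.
Local Notation M2 := 'M[F]_(1 + 1).

Lemma nilpotent2_trace_det a b c d k : scalar_blocks a b c d ^+ k = 0 :> M2 ->
  a * d = b * c /\ a + d = 0.
Proof.
set R : M2 := scalar_blocks a b c d => Rk0.
have blocks0 x y z w : scalar_blocks x y z w = 0 :> M2 -> [/\ x = 0, y = 0, z = 0 & w = 0].
  move=> e; move: (corner_scalar_blocks 0%N x y z w); rewrite e => entry.
  by split; [rewrite -(entry false false) | rewrite -(entry false true)
    | rewrite -(entry true false) | rewrite -(entry true true)]; rewrite /corner mxE.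
(* R times its adjugate is the scalar det R, so det R is nilpotent. *)
have det0 : a * d = b * c.
  pose S : M2 := scalar_blocks d (- b) (- c) a.
  have RS : R *m S = (a * d - b * c)%:M.
    by rewrite scalar_blocks_mul -scalar_blocks_scalar; congr scalar_blocks; ring.
  have SR : S *m R = (a * d - b * c)%:M.
    by rewrite scalar_blocks_mul -scalar_blocks_scalar; congr scalar_blocks; ring.
  have : (R *m S) ^+ k = 0 by rewrite exprMn_comm ?Rk0 ?mul0r // /GRing.comm -!mulmxE RS SR.
  rewrite RS -rmorphXn /= -scalar_blocks_scalar => /blocks0[/eqP].
  by rewrite expf_eq0 subr_eq0 => /andP[_ /eqP].
(* By Cayley-Hamilton R ^+ 2 = tr R * R, so tr R is nilpotent. *)
have RR : R *m R = (a + d)%:M *m R.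
  rewrite -scalar_blocks_scalar !scalar_blocks_mul; congr scalar_blocks;
    rewrite ?[c * b]mulrC -?det0; ring.
have Rexp m : R ^+ m.+1 = ((a + d) ^+ m)%:M *m R.
  elim: m => [|m IH]; first by rewrite expr1 expr0 mul1mx.
  by rewrite exprSr IH -mulmxE -mulmxA RR mulmxA -scalar_mxM exprSr.
split=> //; move: (Rexp k); rewrite exprSr Rk0 mul0r => /esym.
rewrite -scalar_blocks_scalar scalar_blocks_mul => /blocks0[ta _ _ td].
rewrite mul0r addr0 in ta; rewrite mul0r add0r in td.
have : (a + d) ^+ k.+1 = 0 by rewrite exprSr mulrDr ta td addr0.
by move/eqP; rewrite expf_eq0 => /andP[_ /eqP].
Qed.

Lemma nilpotent2_upper (R : M2) k : R ^+ k = 0 ->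
  exists Q Q' : M2, [/\ Q *m Q' = 1%:M, Q' *m Q = 1%:M &
    exists b, Q *m R *m Q' = scalar_blocks 0 b 0 0].
Proof.
rewrite -(corners2 R) /corners; set a := corner R _ _; set b := corner R _ _.
set c := corner R _ _; set d := corner R _ _.
move=> /nilpotent2_trace_det[det0 tr0].
have d_eq : d = - a by apply/eqP; rewrite -addr_eq0 addrC tr0.
have [b0|b_nz] := eqVneq b 0.
  have a0 : a = 0.
    by move: det0; rewrite b0 d_eq mul0r mulrN => /eqP; rewrite oppr_eq0 mulf_eq0 orbb => /eqP.
  exists (scalar_blocks 0 1 1 0), (scalar_blocks 0 1 1 0).
  rewrite !scalar_blocks_mul -scalar_blocks_scalar; split; try by congr scalar_blocks; ring.
  by exists c; congr scalar_blocks; rewrite d_eq a0 b0; ring.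
have c_eq : c = - (a * a) / b by rewrite -mulrN -d_eq det0 [b * c]mulrC mulfK.
exists (scalar_blocks 1 0 (a / b) 1), (scalar_blocks 1 0 (- (a / b)) 1).
rewrite !scalar_blocks_mul -scalar_blocks_scalar; split; try by congr scalar_blocks; ring.
by exists b; congr scalar_blocks; rewrite d_eq c_eq; field.
Qed.

End TwoByTwo.

(* Conjugating
   by the lift of a 2 x 2 matrix that triangularizes its nilpotent matrix of
   corners reduces to the strictly upper triangular case. *)
Lemma twin_centralizer_dichotomy (F : fieldType) l (C : 'M[F]_(l.+1 + l.+1)) k :
  C *m twin_shift F l.+1 = twin_shift F l.+1 *m C -> C ^+ k = 0 ->
  (C ^+ l.+2 == 0) || (C ^+ (l.+1 + l.+1).-1 != 0).
Proof.
set J := twin_shift F l.+1 => comm Ck0.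
have corners_nil : (corners C : 'M_(1 + 1)) ^+ k = 0.
  by rewrite -corners_exp // Ck0 /corners /corner !mxE scalar_blocks_scalar raddf0.
have [Q [Q' [QQ' Q'Q [b upper]]]] := nilpotent2_upper corners_nil.
have lift_comm (R : 'M[F]_(1 + 1)) : corners R *m J = J *m corners R.
  exact: scalar_blocks_comm.
set P : 'M_(l.+1 + l.+1) := corners Q; set P' : 'M_(l.+1 + l.+1) := corners Q'.
have PP' : P *m P' = 1%:M by rewrite -lift_mul QQ' corners_scalar.
have P'P : P' *m P = 1%:M by rewrite -lift_mul Q'Q corners_scalar.
have [P_unit _] := mulmx1_unit PP'.
set C' := P *m C *m P'.
have PC : P *m C = C' *m P by rewrite /C' -mulmxA P'P mulmx1.
have comm' : C' *m J = J *m C'.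
  by rewrite /C' -mulmxA lift_comm !mulmxA -(mulmxA P) comm !mulmxA lift_comm.
have corners' : corners C' = scalar_blocks 0 b 0 0 :> 'M_(1 + 1).
  have commP' : P' *m J = J *m P' := lift_comm Q'.
  by rewrite !corners_mul // /P /P' !lift_corners.
move: (corner_scalar_blocks 0%N 0 b 0 0); rewrite -corners' /corners => cor.
rewrite !(similar_exp_eq0 _ P_unit PC) twin_upper_dichotomy //.
- by move: (cor false false); rewrite corner_scalar_blocks.
- by move: (cor true false); rewrite corner_scalar_blocks.
- by move: (cor true true); rewrite corner_scalar_blocks.
Qed.

Lemma partition_head_large n mu : is_partition mu -> sumn mu = n -> (0 < n)%N ->
  (n <= head 0%N mu)%N -> mu = [:: n].
Proof.
case/andP=> _; case: mu => [|x [|y s]] /=; first by lia.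
  by rewrite addn0 => _ ->.
by case/and3P=> _ y_gt0 _ <-; lia.
Qed.

Unset Implicit Arguments. Set Strict Implicit.

Theorem proposition3p9 (F : closedFieldType) (charF0 : [pchar F] =i pred0)
  (n lam : nat) (B : 'M[F]_n)
  (hBnil : mx_nilpotent B) (hB : has_shape B [:: lam; lam])
  (A : 'M[F]_n) (hAnil : mx_nilpotent A) (hAB : A *m B = B *m A)
  (mu : seq nat) (hmu : has_shape A mu) :
  mu = [:: n] \/ (head 0%N mu <= lam.+1)%N.
Proof.
have [k Ak0] : exists k, A ^+ k = 0 by case: hAnil => k; rewrite iter_mulmx; exists k.
case: hB => lam_part lam_sum [P P_unit PB].
case: lam lam_part lam_sum PB => [|l]; first by case/andP.
move=> _ /= /[!addn0] n_eq; subst n; rewrite jordan_nil_twin => PB.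
case: hmu => mu_part mu_sum [P2 P2_unit PA].
set C := P *m A *m invmx P.
have PAC : P *m A = C *m P by rewrite /C mulmxKV.
have Ck0 : C ^+ k = 0 by apply/eqP; rewrite -(similar_exp_eq0 _ P_unit PAC) Ak0.
have := twin_centralizer_dichotomy (similar_commute P_unit PB hAB) Ck0.
rewrite -!(similar_exp_eq0 _ P_unit PAC) !(similar_exp_eq0 _ P2_unit PA).
rewrite !jordan_nil_exp_eq0 // -ltnNge => /orP[|lt_head]; first by right.
by left; apply: partition_head_large => //; lia.
Qed.
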